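(* Let $\mu$ be a Borel probability measure on a $d$-dimensional real Hilbert space $V$ with compact support $\Omega$, let $\eta>0$, and let $f$ be a function with $\mu(B_{\eta/2}(X))\ge \exp(-f(2/\eta,d))$ for every $X\in\Omega$. Let $A$ be in the $\eta$-interior of $\mathrm{hull}(\Omega)$. Then any $Y^\star\in V_{\mathcal L}$ minimizing $F_A$ over $V_{\mathcal L}$ satisfies $\|Y^\star\|\le 2\eta^{-1} f(2\eta^{-1},d)$. In particular, if $\mu$ is balanced (so $f$ is a polynomial), then $\|Y^\star\|\le \mathrm{poly}(\eta^{-1},d)$.
   Context: $B_r(X)$ is the open ball of radius $r$ about $X$. $F_A(Y)=\langle Y,A\rangle+\log\int_\Omega e^{-\langle Y,X\rangle}d\mu(X)$. $V_{\mathcal L}$ is the linear subspace parallel to the affine hull $\mathrm{aff}(\Omega)$. $A$ is in the $\eta$-interior of $\mathrm{hull}(\Omega)$ if $B_\eta(A)\cap \mathrm{aff}(\Omega)\subseteq \mathrm{hull}(\Omega)$. $\mu$ is balanced if there is a polynomial $f$ such that for all $\delta>0$ and $X\in\Omega$, $\mu(B_\delta(X))\ge \exp(-f(\delta^{-1},d))$. *)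

From HB Require Import structures.
From mathcomp Require Import all_boot all_order all_algebra.
From mathcomp Require Import all_classical all_reals all_analysis.
Set Implicit Arguments. Unset Strict Implicit. Unset Printing Implicit Defensive.
Import Order.TTheory GRing.Theory Num.Theory.
Import numFieldNormedType.Exports.
Local Open Scope classical_set_scope.
Local Open Scope ring_scope.

Section Defs.
Variables (R : realType) (d : nat).

(* The d-dimensional real Hilbert space V is modelled as 'rV[R]_d with the
   standard (Euclidean) inner product. *)
Definition dotp (x y : 'rV[R]_d) : R := \sum_(i < d) x ord0 i * y ord0 i.
Definition enorm (x : 'rV[R]_d) : R := Num.sqrt (dotp x x).

Definition eball (X : 'rV[R]_d) (r : R) : set 'rV[R]_d :=
  [set Z | enorm (Z - X) < r].

Definition openV : set (set 'rV[R]_d) := [set A | open A].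
Definition borelV := g_sigma_algebraType openV.

(* support of a measure: points all of whose open neighbourhoods have
   positive measure (the smallest closed set of full measure) *)
Definition msupp (mu : set borelV -> \bar R) : set 'rV[R]_d :=
  [set X | forall r : R, 0 < r -> (0 < mu (eball X r))%E].

Definition hull (S : set 'rV[R]_d) : set 'rV[R]_d :=
  [set A | exists n (x : 'I_n -> 'rV[R]_d) (l : 'I_n -> R),
     (forall i, S (x i)) /\ (forall i, 0 <= l i) /\ \sum_(i < n) l i = 1 /\
     A = \sum_(i < n) l i *: x i].

Definition aff (S : set 'rV[R]_d) : set 'rV[R]_d :=
  [set A | exists n (x : 'I_n -> 'rV[R]_d) (l : 'I_n -> R),
     (forall i, S (x i)) /\ \sum_(i < n) l i = 1 /\
     A = \sum_(i < n) l i *: x i].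

Definition VL (S : set 'rV[R]_d) : set 'rV[R]_d :=
  [set Y | exists a b, aff S a /\ aff S b /\ Y = a - b].

Definition eta_interior (eta : R) (S : set 'rV[R]_d) (A : 'rV[R]_d) : Prop :=
  hull S A /\ (eball A eta `&` aff S `<=` hull S).

Definition FA (mu : set borelV -> \bar R) (Omega : set 'rV[R]_d)
  (A Y : 'rV[R]_d) : R :=
  dotp Y A + ln (fine (\int[mu]_(X in (Omega : set borelV))
                          (expR (- dotp Y X))%:E)).

End Defs.

From HB Require Import structures.
From mathcomp Require Import all_boot all_order all_algebra.
From mathcomp Require Import all_classical all_reals all_analysis.
From mathcomp Require Import measurable_realfun lra ring.
Import Order.TTheory GRing.Theory Num.Theory.
Import numFieldNormedType.Exports.
Set Implicit Arguments. Unset Strict Implicit. Unset Printing Implicit Defensive.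
Local Open Scope classical_set_scope.
Local Open Scope ring_scope.

(* Let n = ||Ystar||.  Comparing with Y = 0 gives F_A(Ystar) <= F_A(0) <= 0.
   For the lower bound, fix 0 <= t < eta and move from A a distance t
   against Ystar inside aff(Omega): the point Z = A - (t/n) Ystar lies in the
   eta-interior ball, hence in hull(Omega), so some X0 in Omega satisfies
   <Ystar,X0> <= <Ystar,A> - t n.  On the ball B_{eta/2}(X0) the integrand is at
   least exp(-<Ystar,A> + t n - n eta/2), and that ball has mass at least
   exp(-f), which yields F_A(Ystar) >= t n - n eta/2 - f.  Letting t -> eta
   gives n eta/2 <= f. *)

Section Euclid.
Variables (R : realType) (d : nat).
Implicit Types (x y z : 'rV[R]_d).

Lemma dotpC x y : dotp x y = dotp y x.
Proof. by apply: eq_bigr => i _; rewrite mulrC. Qed.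

Lemma dotpDr x y z : dotp x (y + z) = dotp x y + dotp x z.
Proof. by rewrite /dotp -big_split; apply: eq_bigr => i _; rewrite mxE mulrDr. Qed.

Lemma dotpZr x y (a : R) : dotp x (a *: y) = a * dotp x y.
Proof. by rewrite /dotp mulr_sumr; apply: eq_bigr => i _; rewrite mxE mulrCA. Qed.

Lemma dotpNr x y : dotp x (- y) = - dotp x y.
Proof. by rewrite -scaleN1r dotpZr mulN1r. Qed.

Lemma dotpBr x y z : dotp x (y - z) = dotp x y - dotp x z.
Proof. by rewrite dotpDr dotpNr. Qed.

Lemma dotpDl x y z : dotp (y + z) x = dotp y x + dotp z x.
Proof. by rewrite dotpC dotpDr !(dotpC x). Qed.

Lemma dotpZl x y (a : R) : dotp (a *: y) x = a * dotp y x.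
Proof. by rewrite dotpC dotpZr dotpC. Qed.

Lemma dotpNl x y : dotp (- y) x = - dotp y x.
Proof. by rewrite dotpC dotpNr dotpC. Qed.

Lemma dotpBl x y z : dotp (y - z) x = dotp y x - dotp z x.
Proof. by rewrite dotpDl dotpNl. Qed.

Lemma dotp0r x : dotp x 0 = 0.
Proof. by rewrite -(scale0r 0) dotpZr mul0r. Qed.

Lemma dotp_sumr n x (l : 'I_n -> R) (y : 'I_n -> 'rV[R]_d) :
  dotp x (\sum_(i < n) l i *: y i) = \sum_(i < n) l i * dotp x (y i).
Proof.
elim: n l y => [|n IH] l y; first by rewrite !big_ord0 dotp0r.
by rewrite !big_ord_recr /= dotpDr IH dotpZr.
Qed.

Lemma dotp_ge0 x : 0 <= dotp x x.
Proof. by apply: sumr_ge0 => i _; rewrite -expr2 sqr_ge0. Qed.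

Lemma dotp_eq0 x : dotp x x = 0 -> x = 0.
Proof.
move=> /eqP; rewrite psumr_eq0; last by move=> i _; rewrite -expr2 sqr_ge0.
move=> /allP H; apply/matrixP => i j; rewrite mxE (ord1 i).
by have := H j (mem_index_enum j); rewrite -expr2 sqrf_eq0 => /eqP.
Qed.

Lemma enorm_ge0 x : 0 <= enorm x.
Proof. exact: sqrtr_ge0. Qed.

Lemma enorm_sq x : enorm x ^+ 2 = dotp x x.
Proof. by rewrite sqr_sqrtr // dotp_ge0. Qed.

Lemma enorm_eq0 x : enorm x = 0 -> x = 0.
Proof. by move=> h; apply: dotp_eq0; rewrite -enorm_sq h expr0n. Qed.

Lemma enormN x : enorm (- x) = enorm x.
Proof. by rewrite /enorm dotpNl dotpNr opprK. Qed.

Lemma enormZ (a : R) x : enorm (a *: x) = `|a| * enorm x.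
Proof. by rewrite /enorm dotpZl dotpZr mulrA -expr2 sqrtrM ?sqr_ge0 // sqrtr_sqr. Qed.

(* Cauchy-Schwarz: expand 0 <= <b x - a y, b x - a y> with a = |x|, b = |y|. *)
Lemma dotp_le_enorm x y : dotp x y <= enorm x * enorm y.
Proof.
set a := enorm x; set b := enorm y.
have [a0|a0] := eqVneq a 0; first by rewrite (enorm_eq0 a0) dotpC dotp0r a0 mul0r.
have [b0|b0] := eqVneq b 0; first by rewrite (enorm_eq0 b0) dotp0r b0 mulr0.
have ab_gt0 : 0 < a * b by rewrite mulr_gt0 // lt_neqAle eq_sym ?a0 ?b0 enorm_ge0.
have := dotp_ge0 (b *: x - a *: y).
rewrite !(dotpBl, dotpBr, dotpZl, dotpZr) -!enorm_sq -/a -/b (dotpC y x) => h.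
rewrite -(ler_pM2l ab_gt0); nra.
Qed.

Lemma abs_dotp_le_enorm x y : `|dotp x y| <= enorm x * enorm y.
Proof.
rewrite ler_norml dotp_le_enorm andbT lerNl -dotpNl -(enormN x).
exact: dotp_le_enorm.
Qed.

Lemma enorm_triangle x y z : enorm (x - z) <= enorm (x - y) + enorm (y - z).
Proof.
have -> : x - z = (x - y) + (y - z) by rewrite addrA subrK.
move: (x - y) (y - z) => u v.
rewrite -(ler_pXn2r (_ : 0 < 2)%N) ?nnegrE ?addr_ge0 ?enorm_ge0 //.
rewrite enorm_sq !(dotpDl, dotpDr) (dotpC v u) -!enorm_sq.
have := dotp_le_enorm u v; nra.
Qed.

(* The Euclidean norm is controlled by the coordinates, hence by the
   (sup) norm that defines the topology of 'rV[R]_d. *)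
Lemma enorm_le_coord x e : 0 <= e -> (forall i, `|x ord0 i| <= e) ->
  enorm x <= d.+1%:R * e.
Proof.
move=> e0 H.
rewrite -(ler_pXn2r (_ : 0 < 2)%N) ?nnegrE ?mulr_ge0 ?enorm_ge0 //.
rewrite enorm_sq; apply: (@le_trans _ _ (\sum_(i < d) e ^+ 2)).
  apply: ler_sum => i _; rewrite -expr2 -real_normK ?num_real //.
  by rewrite lerXn2r ?nnegrE ?normr_ge0.
rewrite sumr_const card_ord -mulr_natl exprMn.
have hd : (d%:R : R) <= d.+1%:R ^+ 2.
  rewrite -natrX ler_nat; apply: (@leq_trans d.+1) => //.
  by rewrite expnS leq_pmulr.
rewrite mulr1 -mulr_natl; have := sqr_ge0 e; nra.
Qed.

Lemma enorm_le_norm x : enorm x <= d.+1%:R * `|x|.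
Proof.
apply: enorm_le_coord => // i; rewrite [`|x|]mx_normrE.
by apply/bigmax_geP; right; exists (ord0, i).
Qed.

End Euclid.

Section Borel.
Variables (R : realType) (d : nat).
Local Notation V := 'rV[R]_d.
Local Notation T := (borelV R d).

Lemma open_eball (X : V) (r : R) : open (eball X r).
Proof.
rewrite openE => z /= hz; apply/nbhs_ballP.
set e := (r - enorm (z - X)) / d.+1%:R.
have e0 : 0 < e by rewrite divr_gt0 // subr_gt0.
exists e => // w; rewrite -ball_normE /= => hw.
apply: le_lt_trans (enorm_triangle _ z _) _.
rewrite -enormN opprB.
apply: (@le_lt_trans _ _ (d.+1%:R * `|z - w| + enorm (z - X))).
  by rewrite lerD2r enorm_le_norm.
by rewrite -ltrBrDr -ltr_pdivlMl // mulrC.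
Qed.

Lemma lipschitz_continuous (g : V -> R) (K : R) : 0 <= K ->
  (forall x y, `|g x - g y| <= K * `|x - y|) -> continuous g.
Proof.
move=> K0 H x; apply/(@cvgrPdist_lt _ _ _ _ (nbhs_filter x)) => e e0.
have K1 : 0 < K + 1 by rewrite ltr_wpDl.
apply/nbhs_ballP; exists (e / (K + 1)); first by rewrite /= divr_gt0.
move=> t; rewrite -ball_normE /= => ht.
apply: le_lt_trans (H x t) _.
apply: (@le_lt_trans _ _ ((K + 1) * `|x - t|)); first by rewrite ler_wpM2r // lerDl.
by rewrite mulrC -ltr_pdivlMr.
Qed.

Lemma continuous_dotp (Y : V) : continuous (dotp Y).
Proof.
apply: (@lipschitz_continuous _ (enorm Y * d.+1%:R)); first by rewrite mulr_ge0 ?enorm_ge0.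
move=> x y; rewrite -dotpBr; apply: le_trans (abs_dotp_le_enorm _ _) _.
by rewrite -mulrA ler_wpM2l ?enorm_ge0 // enorm_le_norm.
Qed.

Lemma continuous_expR_dotp (Y : V) : continuous (fun X : V => expR (- dotp Y X)).
Proof.
move=> x; rewrite (_ : (fun X => _) = expR \o dotp (- Y)); last first.
  by apply: funext => X /=; rewrite dotpNl.
apply: continuous_comp; [exact: continuous_dotp | exact: continuous_expR].
Qed.

Lemma measurable_open (U : set T) : open (U : set V) -> measurable U.
Proof. by move=> oU; apply: sub_sigma_algebra. Qed.

Lemma measurable_eball (X : V) (r : R) : measurable (eball X r : set T).
Proof. by apply: measurable_open; exact: open_eball. Qed.

Lemma measurable_continuous (g : V -> R) (D : set T) :
  continuous g -> measurable D -> measurable_fun D (g : T -> R).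
Proof.
move=> cg mD; apply: (measurability _ (RGenOpens.measurableE R)).
move=> _ [_ [a [b ->] <-]]; apply: measurableI => //.
apply: measurable_open; apply: open_comp; last exact: interval_open.
by move=> x _; exact: cg.
Qed.

End Borel.

Section Hulls.
Variables (R : realType) (d : nat).
Local Notation V := 'rV[R]_d.
Implicit Types (S : set V) (p q : V).

Lemma hull_aff S : hull S `<=` aff S.
Proof. by move=> z [n [x [l [Sx [_ [l1 ->]]]]]]; exists n, x, l. Qed.

Lemma VL0 S p : aff S p -> VL S 0.
Proof. by move=> hp; exists p, p; rewrite subrr. Qed.

(* aff S is closed under affine combinations of two points: concatenate
   the two families of points and rescale their weights. *)
Lemma aff2 S p q (a b : R) : a + b = 1 -> aff S p -> aff S q -> aff S (a *: p + b *: q).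
Proof.
move=> ab [n1 [x [l [Sx [l1 ->]]]]] [n2 [y [m [Sy [m1 ->]]]]].
exists (n1 + n2)%N, (fun k => match fintype.split k with inl i => x i | inr j => y j end),
  (fun k => match fintype.split k with inl i => a * l i | inr j => b * m j end).
split; first by move=> k; case: (fintype.split k).
have hl (i : 'I_n1) : fintype.split (lshift n2 i) = inl i := unsplitK (inl _ i).
have hr (j : 'I_n2) : fintype.split (rshift n1 j) = inr j := unsplitK (inr _ j).
rewrite !big_split_ord /=.
under eq_bigr => i _ do rewrite hl.
under [X in _ + X = _]eq_bigr => i _ do rewrite hr.
under [X in _ = X + _]eq_bigr => i _ do rewrite hl.
under [X in _ = _ + X]eq_bigr => i _ do rewrite hr.
rewrite -!mulr_sumr l1 m1 !mulr1; split => //.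
by rewrite !scaler_sumr; congr (_ + _); apply: eq_bigr => i _; rewrite scalerA.
Qed.

(* aff S is invariant under translation by its direction space VL S:
   p + s (q - r) = (1 - s) p + s (2 m - r) with m the midpoint of p, q. *)
Lemma aff_translate S p v (s : R) : aff S p -> VL S v -> aff S (p + s *: v).
Proof.
move=> hp [q [r [hq [hr ->]]]].
have hm : aff S (2^-1 *: p + 2^-1 *: q) by apply: aff2 => //; field.
have hm2 : aff S (2 *: (2^-1 *: p + 2^-1 *: q) + (-1) *: r) by apply: aff2 => //; field.
have -> : p + s *: (q - r) =
    (1 - s) *: p + s *: (2 *: (2^-1 *: p + 2^-1 *: q) + (-1) *: r).
  by apply/matrixP => i j; rewrite !mxE; field.
by apply: aff2 => //; rewrite subrK.
Qed.

Lemma hull_dotp_min S (Y Z : V) : hull S Z -> exists x, S x /\ dotp Y x <= dotp Y Z.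
Proof.
case=> [[|n] [x [l [Sx [l0 [l1 ->]]]]]].
  by move: l1; rewrite big_ord0 => /eqP; rewrite eq_sym oner_eq0.
case: (@arg_minP _ _ _ ord0 xpredT (fun i => dotp Y (x i)) isT) => i0 _ hmin.
exists (x i0); split => //.
rewrite dotp_sumr; apply: (@le_trans _ _ (\sum_i l i * dotp Y (x i0))).
  by rewrite -mulr_suml l1 mul1r.
by apply: ler_sum => i _; rewrite ler_wpM2l //; exact: hmin.
Qed.

Lemma eta_interior_below S (A Y : V) (eta t : R) :
  eta_interior eta S A -> VL S Y -> 0 <= t -> t < eta ->
  exists x, S x /\ dotp Y x <= dotp Y A - t * enorm Y.
Proof.
move=> [hA hint] hY t0 teta.
have [Y0|Yn0] := eqVneq (enorm Y) 0.
  by have [x [Sx hx]] := hull_dotp_min Y hA; exists x; rewrite Y0 mulr0 subr0.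
set Z := A + (- (t / enorm Y)) *: Y.
have hZ : hull S Z.
  apply: hint; split; last exact: aff_translate (hull_aff hA) hY.
  rewrite /eball /= /Z addrC addKr enormZ normrN.
  by rewrite ger0_norm ?divr_ge0 ?enorm_ge0 // mulfVK.
have [x [Sx hx]] := hull_dotp_min Y hZ; exists x; split => //.
apply: (le_trans hx); rewrite /Z dotpDr dotpZr -enorm_sq expr2 mulNr mulrA mulfVK //.
Qed.

End Hulls.

Section Support.
Variables (R : realType) (d : nat) (mu : {measure set (borelV R d) -> \bar R}).
Local Notation V := 'rV[R]_d.
Local Notation T := (borelV R d).

Lemma eball_subset (c X : V) (r' r : R) : enorm (c - X) + r' <= r ->
  eball c r' `<=` eball X r.
Proof.
move=> h w hw; apply: le_lt_trans (enorm_triangle _ c _) _.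
by apply: lt_le_trans h; rewrite addrC ltrD2l.
Qed.

Definition rat_ball (qs : 'rV[rat]_d * rat) : set V :=
  eball (map_mx ratr qs.1) (ratr qs.2).

Lemma rat_ball_approx (x : V) (r : R) : 0 < r ->
  exists qs, rat_ball qs x /\ rat_ball qs `<=` eball x r.
Proof.
move=> r0; set de := r / (3 * d.+1%:R).
have de0 : 0 < de by rewrite divr_gt0 // mulr_gt0.
have /fin_all_exists [c hc] : forall i : 'I_d, exists q : rat,
    ratr q \in `](x ord0 i - de), (x ord0 i + de)[.
  move=> i; apply: rat_in_itvoo; rewrite ltrBlDr -addrA ltrDl; exact: addr_gt0.
have [s] : exists s : rat, ratr s \in `](r / 3), (2 * r / 3)[.
  by apply: rat_in_itvoo; lra.
rewrite in_itv /= => /andP[s1 s2].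
have hq : enorm (map_mx ratr (\row_i c i) - x) <= r / 3.
  apply: le_trans (enorm_le_coord (ltW de0) _) _.
    move=> i; rewrite !mxE; have := hc i; rewrite in_itv /= => /andP[h1 h2].
    by rewrite ler_norml; apply/andP; split; lra.
  by rewrite /de le_eqVlt; apply/orP; left; apply/eqP; field; rewrite addrC natr1 pnatr_eq0.
exists (\row_i c i, s); split.
  by rewrite /rat_ball /eball /= -enormN opprB; exact: le_lt_trans hq s1.
apply: eball_subset; apply: (@le_trans _ _ (r / 3 + 2 * r / 3)); first by rewrite lerD // ltW.
by rewrite -mulrDl; nra.
Qed.

Definition null_rat_ball (n : nat) : set T :=
  if unpickle n is Some qs then
    if pselect (mu (rat_ball qs) = 0%E) then rat_ball qs else set0
  else set0.

Lemma measurable_null_rat_ball n : measurable (null_rat_ball n).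
Proof.
rewrite /null_rat_ball; case: (unpickle n) => [qs|] //.
by case: pselect => h //=; rewrite /rat_ball; exact: measurable_eball.
Qed.

Lemma null_rat_ballE n : mu (null_rat_ball n) = 0%E.
Proof.
rewrite /null_rat_ball; case: (unpickle n) => [qs|]; last exact: measure0.
by case: pselect => h //; exact: measure0.
Qed.

Lemma eball_null (X : V) r (B : set T) :
  measurable B -> eball X r `<=` B -> mu B = 0%E -> mu (eball X r : set T) = 0%E.
Proof.
move=> mB sub h; apply/eqP; rewrite eq_le measure_ge0 andbT -h.
by apply: le_measure => //; rewrite inE //; exact: measurable_eball.
Qed.

Lemma msuppE : (msupp mu : set T) = ~` \bigcup_n null_rat_ball n.
Proof.
apply/seteqP; split=> x.
  move=> hx [n _]; rewrite /null_rat_ball; case: (unpickle n) => [qs|] //.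
  case: pselect => //= hnull hqs.
  have r0 : 0 < ratr qs.2 - enorm (x - map_mx ratr qs.1) by rewrite subr_gt0.
  have := hx _ r0; rewrite (eball_null (measurable_eball _ _) _ hnull) ?ltxx //.
  by apply: eball_subset; rewrite addrC subrK.
move=> hx; apply: contrapT => hn; apply: hx.
have [r [r0 hr]] : exists r, 0 < r /\ mu (eball x r : set T) = 0%E.
  apply: contrapT => H; apply: hn => r r0; rewrite lt0e measure_ge0 andbT.
  by apply/negP => /eqP h; apply: H; exists r.
have [qs [xqs sub]] := rat_ball_approx x r0.
exists (pickle qs) => //; rewrite /null_rat_ball pickleK.
case: pselect => // hnull; apply: hnull.
exact: eball_null (measurable_eball _ _) sub hr.
Qed.

Lemma measurable_msupp : measurable (msupp mu : set T).
Proof.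
rewrite msuppE; apply: measurableC; apply: bigcupT_measurable => n.
exact: measurable_null_rat_ball.
Qed.

Lemma msuppC_null : mu (~` (msupp mu : set T)) = 0%E.
Proof.
apply/eqP; rewrite eq_le measure_ge0 andbT msuppE setCK.
apply: le_trans (measure_sigma_subadditive _ _ _ _) _.
- exact: measurable_null_rat_ball.
- by apply: bigcupT_measurable => n; exact: measurable_null_rat_ball.
- by [].
by rewrite eseries0 // => i _ _; exact: null_rat_ballE.
Qed.

Lemma measure_setI_msupp (B : set T) : measurable B ->
  mu B = mu ((msupp mu : set T) `&` B).
Proof.
move=> mB; have mS := measurable_msupp.
have mSB : measurable ((msupp mu : set T) `&` B) by exact: measurableI.
apply/eqP; rewrite eq_le; apply/andP; split; last first.
  by apply: le_measure; rewrite ?inE //; exact: subIsetr.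
apply: (@le_trans _ _ (mu ((msupp mu `&` B) `|` ~` msupp mu : set T))).
  apply: le_measure; rewrite ?inE //.
    by apply: measurableU => //; exact: measurableC.
  by move=> y By; have [Sy|Sy] := pselect (msupp mu y); [left|right].
apply: le_trans (measureU2 _ _ _) _ => //; first exact: measurableC.
by rewrite [X in (_ + X)%E]msuppC_null adde0.
Qed.

End Support.

Section PartitionFunction.
Variables (R : realType) (d : nat) (mu : probability (borelV R d) R).
Local Notation V := 'rV[R]_d.
Local Notation T := (borelV R d).
Local Notation Omega := (msupp mu : set T).

Definition partition (Y : V) : \bar R := (\int[mu]_(X in Omega) (expR (- dotp Y X))%:E)%E.

Lemma measurable_partition_integrand (Y : V) (D : set T) : measurable D ->
  measurable_fun D (fun X : T => (expR (- dotp Y X))%:E).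
Proof.
move=> mD; apply/measurable_EFinP.
by apply: measurable_continuous => //; exact: continuous_expR_dotp.
Qed.

(* At Y = 0 the integrand is 1, so F_A(0) = log mu(Omega) <= 0. *)
Lemma FA_zero_le0 (A : V) : FA mu Omega A 0 <= 0.
Proof.
rewrite /FA dotpC dotp0r add0r.
under eq_integral do rewrite dotpC dotp0r oppr0 expR0.
rewrite integral_cst; last exact: measurable_msupp.
rewrite mul1e; apply: ln_le0.
have := probability_le1 mu (measurable_msupp mu).
by move=> h; apply: (@fine_le _ _ 1%E) => //; exact: fin_num_measure (measurable_msupp mu).
Qed.

(* On a compact support the integrand is bounded, so Z(Y) is finite. *)
Lemma partition_fin_num (Y : V) : compact (msupp mu) -> partition Y \is a fin_num.
Proof.
move=> cpt; have mS := measurable_msupp mu.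
have [M [_ hM]] := compact_bounded cpt.
set K := enorm Y * (d.+1%:R * (M + 1)).
rewrite ge0_fin_numE; last by apply: integral_ge0 => X _; rewrite lee_fin expR_ge0.
apply: (@le_lt_trans _ _ (\int[mu]_(X in Omega) (expR K)%:E)%E).
  apply: ge0_le_integral => //; first exact: measurable_partition_integrand.
  move=> X hX /=; rewrite lee_fin ler_expR; apply: le_trans (ler_norm _) _.
  rewrite normrN; apply: le_trans (abs_dotp_le_enorm _ _) _.
  rewrite ler_wpM2l ?enorm_ge0 //; apply: le_trans (enorm_le_norm _) _.
  by rewrite ler_wpM2l // hM // ltrDl.
rewrite integral_cst //; apply: lte_mul_pinfty => //.
by apply: le_lt_trans (probability_le1 _ mS) _; exact: ltry.
Qed.

(* On the ball B_r(x) the integrand is at least e^{-<Y,x> - |Y| r}, and by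
   Cauchy-Schwarz this bounds Z(Y) from below by the mass of the ball. *)
Lemma partition_ge_ball (Y x : V) (r : R) :
  ((expR (- dotp Y x - enorm Y * r))%:E * mu (eball x r) <= partition Y)%E.
Proof.
have mS := measurable_msupp mu; have mB := measurable_eball x r.
have mSB : measurable (Omega `&` (eball x r : set T)) by exact: measurableI.
rewrite (measure_setI_msupp mu mB) -integral_cst //.
apply: (@le_trans _ _ (\int[mu]_(X in Omega `&` eball x r) (expR (- dotp Y X))%:E)%E).
  apply: ge0_le_integral => //; first by move=> X _; rewrite lee_fin expR_ge0.
    exact: measurable_partition_integrand.
  move=> X [_ hX]; rewrite /= lee_fin ler_expR.
  have hYX := dotp_le_enorm Y (X - x).
  have hr : enorm Y * enorm (X - x) <= enorm Y * r by rewrite ler_wpM2l ?enorm_ge0 // ltW.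
  rewrite dotpBr in hYX; lra.
apply: ge0_subset_integral => //; first exact: measurable_partition_integrand.
Qed.

Lemma FA_ge_ball (A Y x : V) (r F : R) : compact (msupp mu) ->
  ((expR (- F))%:E <= mu (eball x r))%E ->
  dotp Y A - dotp Y x - enorm Y * r - F <= FA mu Omega A Y.
Proof.
move=> cpt hF; set c := - dotp Y x - enorm Y * r.
have hI : partition Y = (fine (partition Y))%:E by rewrite fineK ?partition_fin_num.
have low : expR (c - F) <= fine (partition Y).
  rewrite -lee_fin -hI expRD EFinM; apply: le_trans (partition_ge_ball Y x r).
  by apply: lee_wpmul2l => //; rewrite lee_fin expR_ge0.
have Zpos : 0 < fine (partition Y) by apply: lt_le_trans low; exact: expR_gt0.
have : c - F <= ln (fine (partition Y)).
  by rewrite -(expRK (c - F)) ler_ln ?posrE ?expR_gt0.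
rewrite /FA -/(partition Y) /c; lra.
Qed.

End PartitionFunction.

Lemma le_of_lt_bound (R : realFieldType) (eta n c : R) : 0 < eta -> 0 <= n ->
  (forall t, 0 <= t -> t < eta -> t * n <= c) -> eta * n <= c.
Proof.
move=> eta0 n0 H; apply/ler_addgt0Pr => e e0.
have n1 : 0 < n + 1 by rewrite ltr_wpDl.
set m := Num.min eta (e / (n + 1)).
have m0 : 0 < m by rewrite lt_min eta0 divr_gt0.
have meta : m <= eta by rewrite ge_min lexx.
have me : m * (n + 1) <= e by rewrite -ler_pdivlMr // ge_min lexx orbT.
have := H (eta - m); rewrite subr_ge0 meta ltrBlDr ltrDl m0 => /(_ isT isT).
nra.
Qed.

Unset Implicit Arguments.

Theorem mainTheorem4 (R : realType) (d : nat)
  (mu : probability (borelV R d) R) (eta : R) (f : R -> R -> R)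
  (A Ystar : 'rV[R]_d) :
  compact (msupp mu) ->
  0 < eta ->
  (forall X, msupp mu X ->
     (expR (- f (2 / eta) d%:R))%:E <= mu (eball X (eta / 2)))%E ->
  eta_interior eta (msupp mu) A ->
  VL (msupp mu) Ystar ->
  (forall Y, VL (msupp mu) Y ->
     FA mu (msupp mu) A Ystar <= FA mu (msupp mu) A Y) ->
  enorm Ystar <= 2 / eta * f (2 / eta) d%:R.
Proof.
move=> cpt eta0 hball hint hY hmin.
set F := f (2 / eta) d%:R; set n := enorm Ystar.
have upper : FA mu (msupp mu) A Ystar <= 0.
  apply: le_trans (hmin 0 _) (FA_zero_le0 _ _).
  exact: VL0 (hull_aff hint.1).
have lower t : 0 <= t -> t < eta -> t * n <= n * (eta / 2) + F.
  move=> t0 teta; have [x [Ox hx]] := eta_interior_below hint hY t0 teta.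
  have := FA_ge_ball A Ystar cpt (hball x Ox); rewrite -/n -/F in hx *; lra.
have half : n * (eta / 2) <= F.
  have e2 : eta * n = 2 * (n * (eta / 2)) by field.
  by have := le_of_lt_bound eta0 (enorm_ge0 Ystar) lower; rewrite -/n; lra.
have -> : n = 2 / eta * (n * (eta / 2)) by field; rewrite gt_eqF.
by rewrite ler_wpM2l // divr_ge0 // ltW.
Qed.
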